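(* Let $\mathcal{D}_0=\{\mathbf{x}^{(0)}_i\}_{i=1}^{n_0}$ and $\mathcal{D}_1=\{\mathbf{x}^{(1)}_j\}_{j=1}^{n_1}$ be finite sets of inputs with $n_0=n_1$, and let $f:\mathbb{R}^d\times\{0,1\}\to[0,1]$ be a model such that for each $s\in\{0,1\}$ there are no ties in $\{f_s(\mathbf{x}):\mathbf{x}\in\mathcal{D}_s\}$, where $f_s(\cdot)=f(\cdot,s)$. Let $\mathbf{T}^f$ be the fair matching function of $f$ computed with the empirical (uniform) distributions on $\mathcal{D}_0$ and $\mathcal{D}_1$. Then for any $s\in\{0,1\}$ and any $\mathbf{x}\in\mathcal{D}_s$, the matched individual is $\mathbf{T}^f(\mathbf{x})=f_{s'}^{-1}\circ F_{s'}^{-1}\circ F_s\circ f_s(\mathbf{x})$, where $s'=1-s$.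
   Context: $F_s$ denotes the (empirical) cumulative distribution function of the values $f_s(\mathbf{x})$, $\mathbf{x}\in\mathcal{D}_s$; $F_{s'}^{-1}$ is its quantile (inverse) function; and $f_{s'}^{-1}$ denotes the inverse of $f_{s'}$ restricted to $\mathcal{D}_{s'}$ (well defined since there are no ties). With $n_0=n_1$, a transport map from the empirical distribution on $\mathcal{D}_s$ to that on $\mathcal{D}_{s'}$ is a bijection $\mathbf{T}:\mathcal{D}_s\to\mathcal{D}_{s'}$. For such $\mathbf{T}_s$, $\Delta\mathrm{MDP}(f,\mathbf{T}_s)=\frac{1}{n_s}\sum_{\mathbf{x}\in\mathcal{D}_s}|f(\mathbf{x},s)-f(\mathbf{T}_s(\mathbf{x}),s')|$. The fair matching function of $f$ is defined as follows: $\mathbf{T}^f_s:=\arg\min_{\mathbf{T}_s}\Delta\mathrm{MDP}(f,\mathbf{T}_s)$ over transport maps from $\mathcal{D}_s$ to $\mathcal{D}_{s'}$, $\hat s:=\arg\min_{s\in\{0,1\}}\Delta\mathrm{MDP}(f,\mathbf{T}^f_s)$, and $\mathbf{T}^f:=\mathbf{T}^f_{\hat s}$. *)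

From HB Require Import structures.
From mathcomp Require Import all_boot all_order all_algebra all_fingroup.
From mathcomp Require Import classical_sets reals.
Set Implicit Arguments. Unset Strict Implicit. Unset Printing Implicit Defensive.
Import Order.TTheory GRing.Theory Num.Theory.
Local Open Scope ring_scope.
Local Open Scope classical_set_scope.

Section FairMatching.
Variables (R : realType) (d n : nat).
(* D_s = { X s i | i < n }  (n = n_0 = n_1), inputs in R^d (row vectors) *)
Variable X : bool -> 'I_n -> 'rV[R]_d.
Variable f : 'rV[R]_d -> bool -> R.

Definition ecdf (s : bool) (t : R) : R :=
  #|[set i : 'I_n | f (X s i) s <= t]|%:R / n%:R.

Definition equantile (s : bool) (p : R) : R :=
  inf [set t : R | p <= ecdf s t].

(* transport maps D_s -> D_{s'} (bijections) are encoded by permutations: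
   T(X s i) = X (~~ s) (sigma i). *)
Definition DeltaMDP (s : bool) (sigma : {perm 'I_n}) : R :=
  n%:R^-1 * \sum_(i < n) `|f (X s i) s - f (X (~~ s) (sigma i)) (~~ s)|.

Definition is_fair_matching (s : bool) (sigma : {perm 'I_n}) : Prop :=
  forall tau : {perm 'I_n}, DeltaMDP s sigma <= DeltaMDP s tau.
End FairMatching.

(** Among the permutations [t] minimising the matching cost
    [\sum_j |a_j - b_(t j)|], pick one maximising the correlation
    [\sum_j a_j b_(t j)].  Such a [t] is increasing: if [a_i < a_k] but
    [b_(t k) < b_(t i)], swapping [t i] and [t k] does not increase the cost
    and strictly increases the correlation.  An increasing bijection preserves
    ranks, so [b_(t i)] is the value of rank [#{k | a_k <= a_i}] among the [b]'s,
    which is exactly the quantile [F_(s')^-1 (F_s (a_i))]. *)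
From HB Require Import structures.
From mathcomp Require Import all_boot all_order all_algebra all_fingroup.
From mathcomp Require Import boolp classical_sets reals.
From mathcomp Require Import lra.
Set Implicit Arguments. Unset Strict Implicit. Unset Printing Implicit Defensive.
Import Order.TTheory GRing.Theory Num.Theory.
Local Open Scope ring_scope.

Lemma norm_uncross (R : realDomainType) (a1 a2 b1 b2 : R) :
  a1 < a2 -> b2 < b1 -> `|a1 - b2| + `|a2 - b1| <= `|a1 - b1| + `|a2 - b2|.
Proof.
move=> lt_a lt_b.
have := ler_norm (a1 - b1); have := ler_norm (a2 - b2).
rewrite -[`|a1 - b1|]normrN -[`|a2 - b2|]normrN.
have := ler_norm (- (a1 - b1)); have := ler_norm (- (a2 - b2)).
have [h1|h1] := lerP 0 (a1 - b2);
  [rewrite (ger0_norm h1) | rewrite (ltr0_norm h1)];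
have [h2|h2] := lerP 0 (a2 - b1);
  [rewrite (ger0_norm h2) | rewrite (ltr0_norm h2)
  |rewrite (ger0_norm h2) | rewrite (ltr0_norm h2)]; lra.
Qed.

Lemma sum_perm_mulg_tperm (V : nmodType) (n : nat) (h : 'I_n -> 'I_n -> V)
    (t : {perm 'I_n}) (i k : 'I_n) :
  i != k ->
  \sum_j h j ((t * tperm (t i) (t k))%g j) + (h i (t i) + h k (t k))
  = \sum_j h j (t j) + (h i (t k) + h k (t i)).
Proof.
move=> neq_ik; have neq_ki : k != i by rewrite eq_sym.
rewrite (bigD1 i isT) (bigD1 k neq_ki) [\sum_j h j (t j)](bigD1 i isT).
rewrite (bigD1 k neq_ki) /= !permM tpermL tpermR.
rewrite (eq_bigr (fun j => h j (t j))); last first.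
  by move=> j /andP[neq_ji neq_jk]; rewrite permM tpermD // (inj_eq perm_inj) eq_sym.
rewrite addrACA [RHS]addrACA [h i (t i) + _]addrC; congr (_ + _).
by rewrite addrAC [RHS]addrAC [h k (t k) + _]addrC.
Qed.

Lemma inf_attained (R : realType) (E : set R) (x : R) :
  E x -> lbound E x -> inf E = x.
Proof.
move=> Ex lbx; apply/le_anti/andP; split; last by apply: lb_le_inf lbx; exists x.
by apply: ge_inf Ex; exists x.
Qed.

Section Rank.
Variables (R : realDomainType) (I : finType).
Implicit Types (a b : I -> R) (x y : R).

Definition rank a x := #|[set i | a i <= x]|.

Lemma rank_le_min b j x : (rank b (b j) <= rank b x)%N -> b j <= x.
Proof.
move=> le_rank; rewrite leNgt; apply/negP => lt_x.
suff : (rank b x < rank b (b j))%N by rewrite ltnNge le_rank.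
apply: proper_card; apply/properP; split.
  by apply/fintype.subsetP => i; rewrite !inE => /le_trans; apply; rewrite ltW.
by exists j; rewrite !inE ?lexx // -ltNge.
Qed.

Lemma rank_perm b (t : {perm I}) x : rank (b \o t) x = rank b x.
Proof.
rewrite /rank -(card_preimset [set j | b j <= x] (@perm_inj _ t)).
by apply: eq_card => i; rewrite !inE.
Qed.

End Rank.

Lemma inf_rank_ge (R : realType) (I : finType) (b : I -> R) (j : I) :
  inf [set x | (rank b (b j) <= rank b x)%N]%classic = b j.
Proof. by apply: inf_attained => //= x; apply: rank_le_min. Qed.

Section OptimalMatching.
Variables (R : realDomainType) (n : nat) (a b : 'I_n -> R).
Hypothesis b_inj : injective b.

Definition matching_cost (t : {perm 'I_n}) := \sum_j `|a j - b (t j)|.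
Definition matching_corr (t : {perm 'I_n}) := \sum_j a j * b (t j).

Definition increasing_matching (t : {perm 'I_n}) :=
  forall i k, a i < a k -> b (t i) < b (t k).

Lemma cost_corr_optimal_increasing t :
  (forall u, matching_cost t <= matching_cost u) ->
  (forall u, matching_cost u = matching_cost t -> matching_corr u <= matching_corr t) ->
  increasing_matching t.
Proof.
move=> cost_min corr_max i k lt_a; rewrite ltNge; apply/negP => le_b.
have neq_ik : i != k by apply: contraTneq lt_a => ->; rewrite ltxx.
have lt_b : b (t k) < b (t i).
  by rewrite lt_neqAle le_b andbT (inj_eq b_inj) (inj_eq perm_inj) eq_sym.
pose u := (t * tperm (t i) (t k))%g.
have cost_u := sum_perm_mulg_tperm (fun j l => `|a j - b l|) t neq_ik.
have corr_u := sum_perm_mulg_tperm (fun j l => a j * b l) t neq_ik.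
have uncross := norm_uncross lt_a lt_b.
have gain : 0 < (a k - a i) * (b (t i) - b (t k)) by rewrite mulr_gt0 ?subr_gt0.
have cost_eq : matching_cost u = matching_cost t.
  by apply/le_anti; rewrite cost_min andbT /matching_cost /u; lra.
by have := corr_max u cost_eq; rewrite /matching_corr /u; nra.
Qed.

Lemma exists_optimal_increasing_matching :
  exists2 t : {perm 'I_n},
    forall u, matching_cost t <= matching_cost u & increasing_matching t.
Proof.
case: (arg_minP matching_cost (isT : predT 1%g)) => t0 _ t0_min.
case: (@arg_maxP _ _ _ t0 [pred u | matching_cost u == matching_cost t0]
        matching_corr (eqxx _)) => t /eqP cost_t corr_max.
have cost_min u : matching_cost t <= matching_cost u by rewrite cost_t t0_min.
exists t => //; apply: cost_corr_optimal_increasing => // u cost_u.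
by apply: corr_max; rewrite /= cost_u cost_t.
Qed.

Hypothesis a_inj : injective a.

Lemma increasing_matching_le t :
  increasing_matching t -> forall i k, (b (t k) <= b (t i)) = (a k <= a i).
Proof.
move=> t_incr i k; apply/idP/idP.
  by apply: contraTT; rewrite -!ltNge; apply: t_incr.
by case: (ltgtP (a k) (a i)) => // [/t_incr/ltW | /a_inj ->].
Qed.

Lemma increasing_matching_rank t :
  increasing_matching t -> forall i, rank b (b (t i)) = rank a (a i).
Proof.
move=> t_incr i; rewrite -(rank_perm _ t); apply: eq_card => k.
by rewrite !inE increasing_matching_le.
Qed.

End OptimalMatching.

Lemma ecdfE (R : realType) (d n : nat) (X : bool -> 'I_n -> 'rV[R]_d)
    (f : 'rV[R]_d -> bool -> R) s x :
  ecdf X f s x = (rank (fun i => f (X s i) s) x)%:R / n%:R.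
Proof.
congr (_%:R / _); apply: eq_card => i.
by rewrite finset.inE; apply/idP/idP; rewrite in_setE.
Qed.

Lemma equantile_ecdf (R : realType) (d n : nat) (X : bool -> 'I_n -> 'rV[R]_d)
    (f : 'rV[R]_d -> bool -> R) s s' x :
  (0 < n)%N ->
  equantile X f s' (ecdf X f s x)
  = inf [set y | (rank (fun i => f (X s i) s) x
                  <= rank (fun j => f (X s' j) s') y)%N]%classic.
Proof.
move=> n_gt0; congr inf; apply/funext => y /=.
by rewrite !ecdfE ler_pM2r ?invr_gt0 ?ltr0n // ler_nat.
Qed.

Theorem mainTheorem4 (R : realType) (d n : nat)
    (X : bool -> 'I_n -> 'rV[R]_d) (f : 'rV[R]_d -> bool -> R)
    (f_range : forall x s, 0 <= f x s <= 1)
    (no_ties : forall s, injective (fun i : 'I_n => f (X s i) s)) :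
  forall s : bool,
    exists2 sigma : {perm 'I_n},
      is_fair_matching X f s sigma &
      forall i : 'I_n,
        f (X (~~ s) (sigma i)) (~~ s)
        = equantile X f (~~ s) (ecdf X f s (f (X s i) s)).
Proof.
move=> s.
have [t t_min t_incr] :=
  exists_optimal_increasing_matching (fun i => f (X s i) s) (no_ties (~~ s)).
exists t => [tau | i].
  by rewrite /DeltaMDP ler_wpM2l ?invr_ge0 ?ler0n ?t_min.
rewrite equantile_ecdf ?(leq_ltn_trans (leq0n i) (ltn_ord i)) //.
by rewrite -(increasing_matching_rank (no_ties s) t_incr) inf_rank_ge.
Qed.
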